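(* Let $n\ge2$, $p\in\mathbb{Q}[t]$, $q(t)=t\,p(t)$, and $e_1=t_1+\dots+t_n$. Then \[ a_{(p,1,0,\dots,0)}=a_{(p,0,0,\dots,0)}\cdot e_1-a_{(q,0,0,\dots,0)}. \]
   Context: For $p\in\mathbb{Q}[t]$ and nonnegative integers $\lambda_2,\dots,\lambda_n$, $a_{(p,\lambda_2,\dots,\lambda_n)}(t_1,\dots,t_n)$ is the determinant of the $n\times n$ matrix whose first row is $(p(t_1),\dots,p(t_n))$ and whose $k$-th row, for $k=2,\dots,n$, is $(t_1^{\lambda_k+n-k},\dots,t_n^{\lambda_k+n-k})$. *)

From HB Require Import structures.
From mathcomp Require Import all_boot all_algebra.
From mathcomp Require Import mpoly.
Set Implicit Arguments. Unset Strict Implicit. Unset Printing Implicit Defensive.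
Import GRing.Theory.
Local Open Scope ring_scope.

(* a_(p, lam_2, ..., lam_n)(t_1,...,t_n) as an element of Q[t_1,...,t_n].
   [lam] is the list [:: lam_2; ...; lam_n].  Rows/columns are 0-indexed:
   row 0 is (p(t_1), ..., p(t_n)); row k >= 1 (i.e. paper row k+1) is
   (t_j ^ (lam_{k+1} + n - (k+1)))_j, and lam_{k+1} = nth 0 lam k.-1. *)
Definition adet (n : nat) (p : {poly rat}) (lam : seq nat) : {mpoly rat[n]} :=
  \det (\matrix_(k < n, j < n)
          if k == 0 :> nat then (map_poly (@mpolyC n rat) p).['X_j]
          else 'X_j ^+ (nth 0%N lam k.-1 + n - k.+1))%N.

From HB Require Import structures.
From mathcomp Require Import all_boot all_algebra perm.
From mathcomp Require Import mpoly.
Set Implicit Arguments. Unset Strict Implicit. Unset Printing Implicit Defensive.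
Local Open Scope ring_scope.
Import GRing.Theory.

(* Scaling row [k] of an alternant by the variables and summing over [k] gives
   [a * e_1] by multilinearity of the determinant.  Scaling row [k >= 2] of
   [a_(p,0,...,0)] duplicates row [k - 1], scaling row [1] gives
   [a_(p,1,0,...,0)] and scaling row [0] gives [a_(q,0,...,0)]. *)

Section ScaleRow.

Variables (R : comNzRingType) (n : nat).

Definition scale_row (k : nat) (x : 'I_n -> R) (A : 'M[R]_n) : 'M[R]_n :=
  \matrix_(i, j) if i == k :> nat then A i j * x j else A i j.

Lemma det_scale_row_sum (A : 'M[R]_n) (x : 'I_n -> R) :
  \sum_(k < n) \det (scale_row k x A) = \det A * \sum_j x j.
Proof.
rewrite /determinant exchange_big /= mulr_suml; apply: eq_bigr => s _.
rewrite -mulrA -mulr_sumr; congr (_ * _).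
rewrite mulr_sumr [RHS](reindex_inj (@perm_inj _ s)) /=; apply: eq_bigr => k _.
rewrite (bigD1 k) //= (bigD1 k (P := predT)) //= !mxE eqxx.
rewrite mulrAC; congr (_ * _); congr (_ * _).
by apply: eq_bigr => i /negbTE ik; rewrite mxE val_eqE ik.
Qed.

Definition alt_mx (f x : 'I_n -> R) : 'M[R]_n :=
  \matrix_(k, j) if k == 0 :> nat then f j else x j ^+ (n - k.+1).

Lemma det_scale_row_alt_mx (f x : 'I_n -> R) (k : 'I_n) :
  (1 < k)%N -> \det (scale_row k x (alt_mx f x)) = 0.
Proof.
move=> k_gt1.
have km1_lt_n : (k.-1 < n)%N by rewrite (leq_ltn_trans (leq_pred k)).
have km1_S : (k.-1).+1 = k by rewrite prednK // ltnW.
have km1_neq_k : (k.-1 == k) = false.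
  by apply/negbTE; rewrite neq_ltn prednK ?leqnn // ltnW.
apply: (@determinant_alternate _ _ _ k (Ordinal km1_lt_n)).
  by apply/eqP => /(congr1 val) /= /eqP; rewrite eq_sym km1_neq_k.
move=> j; rewrite !mxE eqxx /= km1_neq_k km1_S.
have km1_neq0 : (k.-1 == 0) = false by apply/negbTE; rewrite -lt0n -ltnS km1_S.
have k_neq0 : (k == 0 :> nat) = false by apply/negbTE; rewrite -lt0n ltnW.
by rewrite k_neq0 km1_neq0 -exprSr subnSK.
Qed.

End ScaleRow.

Lemma det_alt_mx_mul_sum (R : comNzRingType) (m : nat) (f x : 'I_m.+2 -> R) :
  \det (alt_mx f x) * \sum_j x j
  = \det (scale_row 0 x (alt_mx f x)) + \det (scale_row 1 x (alt_mx f x)).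
Proof.
rewrite -det_scale_row_sum !big_ord_recl addrA big1 ?addr0 // => k _.
exact: det_scale_row_alt_mx.
Qed.

Definition adet0_mx (n : nat) (p : {poly rat}) : 'M[{mpoly rat[n]}]_n :=
  alt_mx (fun j => (map_poly (@mpolyC n rat) p).['X_j]) (fun j => 'X_j).

Lemma adet_nseq0 (n : nat) (p : {poly rat}) :
  adet n p (nseq n.-1 0%N) = \det (adet0_mx n p).
Proof.
congr (\det _); apply/matrixP => k j; rewrite !mxE.
by case: eqP => // _; rewrite nth_nseq if_same.
Qed.

Lemma adet_Xmul_nseq0 (n : nat) (p : {poly rat}) :
  adet n ('X * p) (nseq n.-1 0%N)
  = \det (scale_row 0 (fun j => 'X_j) (adet0_mx n p)).
Proof.
congr (\det _); apply/matrixP => k j; rewrite !mxE.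
case: eqP => // _; last by rewrite nth_nseq if_same.
by rewrite rmorphM /= map_polyX hornerM hornerX mulrC.
Qed.

Lemma adet_1_nseq0 (n : nat) (p : {poly rat}) :
  adet n p (1%N :: nseq n.-2 0%N)
  = \det (scale_row 1 (fun j => 'X_j) (adet0_mx n p)).
Proof.
congr (\det _); apply/matrixP => -[[|[|k]] lt_k_n] j; rewrite !mxE //=.
  by rewrite -exprSr subnSK.
by rewrite nth_nseq if_same.
Qed.

Theorem lemma3p9 (n : nat) (p : {poly rat}) :
  (2 <= n)%N ->
  adet n p (1%N :: nseq n.-2 0%N) =
    adet n p (nseq n.-1 0%N) * (\sum_(i < n) 'X_i)
    - adet n ('X * p) (nseq n.-1 0%N).
Proof.
case: n => [|[|m]] // _.
rewrite adet_1_nseq0 adet_nseq0 adet_Xmul_nseq0 det_alt_mx_mul_sum.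
by rewrite addrC addKr.
Qed.
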